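(* Suppose $G$ consists of a single strongly connected component and at least one vertex of $G$ has out-degree at least two. Then the flow $\psi$ on $\Delta$ has sensitive dependence on initial conditions.
   Context: $G$ is a finite directed graph (loops allowed) with vertex set $V$. $\Omega$ is the set of bi-infinite paths in $G$, i.e. sequences $(x_i)_{i\in\mathbb Z}\in V^{\mathbb Z}$ such that for every $i$ there is an edge from $x_i$ to $x_{i+1}$. Fix $h>0$. $\bar\Delta$ is the set of functions $x:\mathbb R\to V$ that are constant on each interval $[nh,(n+1)h)$, $n\in\mathbb Z$, and satisfy $(x(ih))_{i\in\mathbb Z}\in\Omega$. $\Delta=\{x(\cdot+t): x\in\bar\Delta,\ t\in\mathbb R\}$, with metric $d(x,y)=\sum_{i\in\mathbb Z}4^{-|i|}\frac1h\int_{ih}^{(i+1)h}\delta(x,y,t)\,dt$, where $\delta(x,y,t)=1$ if $x(t)\ne y(t)$ and $0$ otherwise. The flow $\psi:\mathbb R\times\Delta\to\Delta$ is $\psi(t,x)=x(\cdot+t)$. ''$G$ consists of a single strongly connected component'' means that for all $u,v\in V$ (including $u=v$) there is a directed path of positive length from $u$ to $v$. A flow $\Phi$ on a metric space $X$ has sensitive dependence on initial conditions if there is $\delta>0$ such that for every $x\in X$ and every neighborhood $B$ of $x$ there are $y\in B$ and $t>0$ with $d(\Phi_t(x),\Phi_t(y))>\delta$. *)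

From Stdlib Require Import Reals ZArith List Relations Classical ClassicalEpsilon ClassicalDescription.
Open Scope R_scope.

Section Defs.
Context {V : Type} (e : V -> V -> Prop) (h : R).

Definition finite_type (T : Type) : Prop := exists l : list T, forall v, In v l.

(* single strongly connected component: path of positive length between any u v *)
Definition strongly_connected : Prop := forall u v : V, clos_trans V e u v.

Definition has_outdeg_ge2 : Prop :=
  exists v w1 w2 : V, w1 <> w2 /\ e v w1 /\ e v w2.

Definition in_Omega (s : Z -> V) : Prop := forall i : Z, e (s i) (s (i + 1)%Z).

Definition in_Delta_bar (x : R -> V) : Prop :=
  (forall (n : Z) (t : R), IZR n * h <= t < (IZR n + 1) * h -> x t = x (IZR n * h)) /\
  in_Omega (fun i : Z => x (IZR i * h)).

Definition in_Delta (x : R -> V) : Prop :=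
  exists (xb : R -> V) (t : R), in_Delta_bar xb /\ forall s, x s = xb (s + t).

Definition psi (t : R) (x : R -> V) : R -> V := fun s => x (s + t).

Definition delta (x y : R -> V) (t : R) : R :=
  if excluded_middle_informative (x t <> y t) then 1 else 0.

(* Riemann integral of f over [a,b] (value chosen when f is Riemann integrable;
   RiemannInt does not depend on the integrability proof) *)
Definition integral (f : R -> R) (a b : R) : R :=
  epsilon (inhabits 0) (fun l => exists pr : Riemann_integrable f a b, RiemannInt pr = l).

Definition d_term (x y : R -> V) (i : Z) : R :=
  / (4 ^ Z.abs_nat i) * (/ h * integral (delta x y) (IZR i * h) ((IZR i + 1) * h)).

Definition d_partial (x y : R -> V) (N : nat) : R :=
  sum_f_R0 (fun k => d_term x y (Z.of_nat k - Z.of_nat N)%Z) (2 * N).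

Definition d (x y : R -> V) : R :=
  epsilon (inhabits 0) (fun l => Un_cv (d_partial x y) l).

Definition is_nbhd (x : R -> V) (B : (R -> V) -> Prop) : Prop :=
  (forall y, B y -> in_Delta y) /\
  exists eps, eps > 0 /\ forall y, in_Delta y -> d x y < eps -> B y.

Definition sensitive_dependence : Prop :=
  exists dl : R, dl > 0 /\
    forall x, in_Delta x -> forall B, is_nbhd x B ->
      exists y t, B y /\ t > 0 /\ d (psi t x) (psi t y) > dl.

End Defs.

(* A point of Delta is a bi-infinite walk s read through blocks of length h with some phase.
   By strong connectivity, from s K one can walk to a vertex with two out-edges and branch
   off there, so s can be altered beyond any index K while staying a walk.  Taking K past
   the blocks 0, ±1, ..., ±M leaves the point within 2/3 * 4^-M, while flowing to the first
   block where the two walks differ puts a disagreement on [0, h), forcing distance >= 1.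
   Hence delta = 1/2 witnesses sensitive dependence. *)

From Stdlib Require Import Reals Lra Lia List Relations
  Classical ClassicalEpsilon FunctionalExtensionality.
Open Scope R_scope.

Definition cell (h c u : R) : Z := Int_part ((u + c) / h).

Definition cell_constant {T : Type} (h c : R) (g : R -> T) : Prop :=
  forall u v, cell h c u = cell h c v -> g u = g v.

Lemma cell_bounds h c u : h > 0 ->
  IZR (cell h c u) * h <= u + c < (IZR (cell h c u) + 1) * h.
Proof.
  intros hp. unfold cell. destruct (base_Int_part ((u + c) / h)) as [H1 H2].
  assert (E : (u + c) / h * h = u + c) by (field; lra).
  set (w := (u + c) / h) in *. split; nra.
Qed.

Lemma cell_unique h c u k : h > 0 ->
  IZR k * h <= u + c < (IZR k + 1) * h -> cell h c u = k.
Proof.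
  intros hp [H1 H2]. unfold cell. symmetry. apply Int_part_spec.
  assert (E : (u + c) / h * h = u + c) by (field; lra).
  set (w := (u + c) / h) in *. split; nra.
Qed.

Lemma cell_monotone h c u v : h > 0 -> u <= v -> (cell h c u <= cell h c v)%Z.
Proof.
  intros hp Huv. pose proof (cell_bounds h c u hp). pose proof (cell_bounds h c v hp).
  assert (Hlt : IZR (cell h c u) < IZR (cell h c v + 1)) by (rewrite plus_IZR; nra).
  apply lt_IZR in Hlt. lia.
Qed.

Lemma cell_shift h c t u : cell h c (u + t) = cell h (t + c) u.
Proof. unfold cell. replace (u + t + c) with (u + (t + c)) by ring. reflexivity. Qed.

Lemma cell_mult h k : h > 0 -> cell h 0 (IZR k * h) = k.
Proof. intros hp. apply cell_unique; [exact hp | nra]. Qed.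

Lemma cell_constant_comp {T : Type} h c (s : Z -> T) :
  cell_constant h c (fun u => s (cell h c u)).
Proof. intros u v E. rewrite E. reflexivity. Qed.

Lemma Riemann_integrable_const_on_open f a b : a <= b ->
  (forall x y, a < x < b -> a < y < b -> f x = f y) -> Riemann_integrable f a b.
Proof.
  intros Hab Hf.
  assert (Hstep : IsStepFun f a b).
  { exists (a :: b :: nil), (f ((a + b) / 2) :: nil). repeat split.
    - intros [|i] Hi; simpl in *; [lra | lia].
    - simpl. unfold Rmin. destruct (Rle_dec a b); lra.
    - simpl. unfold Rmax. destruct (Rle_dec a b); lra.
    - intros [|i] Hi; simpl in *; [|lia].
      intros x Hx. unfold open_interval in Hx. unfold Rmin, Rmax in Hx.
      destruct (Rle_dec a b); [|lra]. apply Hf; lra. }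
  intros eps. exists (mkStepFun Hstep), (mkStepFun (StepFun_P4 a b 0)). split.
  - intros t _. simpl. unfold fct_cte. rewrite Rminus_diag, Rabs_R0. lra.
  - rewrite StepFun_P18, Rmult_0_l, Rabs_R0. apply cond_pos.
Qed.

Lemma integral_RiemannInt f a b (pr : Riemann_integrable f a b) :
  integral f a b = RiemannInt pr.
Proof.
  unfold integral.
  destruct (epsilon_spec (inhabits 0)
    (fun l => exists pr, RiemannInt (f := f) (a := a) (b := b) pr = l)) as [pr' <-].
  - exists (RiemannInt pr), pr. reflexivity.
  - apply RiemannInt_P5.
Qed.

(* An interval of length [h] meets at most two cells: split it at the cell boundary [p]. *)
Lemma cell_constant_integrable h c g a : h > 0 -> cell_constant h c g ->
  Riemann_integrable g a (a + h).
Proof.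
  intros hp Hg. set (k := cell h c a). pose proof (cell_bounds h c a hp) as Ha. fold k in Ha.
  set (p := (IZR k + 1) * h - c).
  apply RiemannInt_P24 with p; apply Riemann_integrable_const_on_open;
    try (unfold p; lra); intros x y Hx Hy; apply Hg.
  - rewrite (cell_unique h c x k), (cell_unique h c y k); unfold p in *; auto; lra.
  - rewrite (cell_unique h c x (k + 1)), (cell_unique h c y (k + 1)); auto;
      rewrite plus_IZR; unfold p in *; lra.
Qed.

Lemma integral_cell_constant_bounds h c g a l r : h > 0 -> cell_constant h c g ->
  (forall u, a < u < a + h -> l <= g u <= r) -> l * h <= integral g a (a + h) <= r * h.
Proof.
  intros hp Hg Hb. pose proof (cell_constant_integrable h c g a hp Hg) as pr.
  rewrite (integral_RiemannInt _ _ _ pr).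
  pose proof (RiemannInt_const_bound (l := l) (u := r) pr) as Hbound.
  replace (a + h - a) with h in Hbound by ring. apply Hbound; [lra | exact Hb].
Qed.

Definition sym_sum (a : Z -> R) (N : nat) : R :=
  sum_f_R0 (fun k => a (Z.of_nat k - Z.of_nat N)%Z) (2 * N).

Definition geom_dominated (a : Z -> R) : Prop :=
  forall i, 0 <= a i <= / 4 ^ Z.abs_nat i.

Lemma sym_sum_S a N :
  sym_sum a (S N) = a (- Z.of_nat (S N))%Z + sym_sum a N + a (Z.of_nat (S N)).
Proof.
  unfold sym_sum. replace (2 * S N)%nat with (S (S (2 * N))) by lia.
  rewrite tech5, decomp_sum by lia. simpl Init.Nat.pred.
  rewrite (sum_eq _ (fun k => a (Z.of_nat k - Z.of_nat N)%Z)) by (intros i _; f_equal; lia).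
  replace (Z.of_nat 0 - Z.of_nat (S N))%Z with (- Z.of_nat (S N))%Z by lia.
  replace (Z.of_nat (S (S (2 * N))) - Z.of_nat (S N))%Z with (Z.of_nat (S N)) by lia.
  reflexivity.
Qed.

Lemma inv_pow4_S N : / 4 ^ S N = / 4 * / 4 ^ N.
Proof. simpl. apply Rinv_mult. Qed.

Lemma inv_pow4_pos N : 0 < / 4 ^ N.
Proof. apply Rinv_0_lt_compat, pow_lt. lra. Qed.

Lemma sym_sum_step a N : geom_dominated a ->
  sym_sum a N <= sym_sum a (S N) <= sym_sum a N + 2 * / 4 ^ S N.
Proof.
  intros Ha. rewrite sym_sum_S.
  pose proof (Ha (- Z.of_nat (S N))%Z) as Hl. pose proof (Ha (Z.of_nat (S N))) as Hr.
  replace (Z.abs_nat (- Z.of_nat (S N))) with (S N) in Hl by lia.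
  replace (Z.abs_nat (Z.of_nat (S N))) with (S N) in Hr by lia.
  lra.
Qed.

Lemma sym_sum_le a N : geom_dominated a -> sym_sum a N <= 5/3 - 2/3 * / 4 ^ N.
Proof.
  intros Ha. induction N as [|N IH].
  - pose proof (Ha 0%Z). unfold sym_sum. simpl in *. lra.
  - pose proof (sym_sum_step a N Ha). rewrite inv_pow4_S in *. lra.
Qed.

(* The tail beyond index M is at most 2 * sum_(n > M) 4^-n = 2/3 * 4^-M. *)
Lemma sym_sum_le_of_vanish a M N : geom_dominated a ->
  (forall i, (Z.abs_nat i <= M)%nat -> a i = 0) ->
  sym_sum a N <= 2/3 * (/ 4 ^ M - / 4 ^ Nat.max N M).
Proof.
  intros Ha Hz. induction N as [|N IH].
  - rewrite Nat.max_r by lia. unfold sym_sum. simpl. rewrite Hz by (simpl; lia). lra.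
  - destruct (Nat.le_gt_cases (S N) M) as [HNM | HNM].
    + rewrite Nat.max_r in * by lia. rewrite sym_sum_S, !Hz by lia. lra.
    + rewrite Nat.max_l in * by lia. pose proof (sym_sum_step a N Ha).
      rewrite inv_pow4_S in *. lra.
Qed.

Lemma sym_sum_cv a : geom_dominated a -> exists l, Un_cv (sym_sum a) l.
Proof.
  intros Ha. assert (Hgrow : Un_growing (sym_sum a)) by (intros N; apply sym_sum_step, Ha).
  destruct (growing_cv _ Hgrow) as [l Hl]; [|exists l; exact Hl].
  exists (5/3). intros x [N ->]. pose proof (sym_sum_le a N Ha). pose proof (inv_pow4_pos N). lra.
Qed.

Lemma Un_cv_le_bound u l b : (forall n, u n <= b) -> Un_cv u l -> l <= b.
Proof.
  intros Hb Hu. apply (@Rle_cv_lim u (fun _ => b) l b Hb Hu).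
  intros eps Heps. exists 0%nat. intros. rewrite R_dist_eq. exact Heps.
Qed.

Section Metric.
Context {V : Type} (h : R).

Lemma d_partial_cv (X Y : R -> V) : geom_dominated (d_term h X Y) ->
  Un_cv (d_partial h X Y) (d h X Y).
Proof.
  intros Hd. unfold d. apply epsilon_spec. exact (sym_sum_cv _ Hd).
Qed.

Lemma d_term_0_le_d (X Y : R -> V) : geom_dominated (d_term h X Y) -> d_term h X Y 0 <= d h X Y.
Proof.
  intros Hd. apply (growing_ineq (sym_sum (d_term h X Y)) _) with (n := 0%nat).
  - intros N. apply sym_sum_step, Hd.
  - apply d_partial_cv, Hd.
Qed.

Lemma d_le_of_vanish (X Y : R -> V) M : geom_dominated (d_term h X Y) ->
  (forall i, (Z.abs_nat i <= M)%nat -> d_term h X Y i = 0) -> d h X Y <= 2/3 * / 4 ^ M.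
Proof.
  intros Hd Hz. apply (Un_cv_le_bound (d_partial h X Y)); [|apply d_partial_cv, Hd].
  intros N. pose proof (sym_sum_le_of_vanish _ M N Hd Hz). pose proof (inv_pow4_pos (Nat.max N M)).
  unfold d_partial. fold (sym_sum (d_term h X Y) N). lra.
Qed.

Lemma delta_bounds (X Y : R -> V) u : 0 <= delta X Y u <= 1.
Proof. unfold delta. destruct (ClassicalDescription.excluded_middle_informative _); lra. Qed.

Lemma delta_eq0 (X Y : R -> V) u : X u = Y u -> delta X Y u = 0.
Proof. intros E. unfold delta. destruct (ClassicalDescription.excluded_middle_informative _); tauto. Qed.

Lemma delta_eq1 (X Y : R -> V) u : X u <> Y u -> delta X Y u = 1.
Proof. intros E. unfold delta. destruct (ClassicalDescription.excluded_middle_informative _); tauto. Qed.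

Lemma cell_constant_delta c (X Y : R -> V) :
  cell_constant h c X -> cell_constant h c Y -> cell_constant h c (delta X Y).
Proof. intros HX HY u v E. unfold delta. rewrite (HX u v E), (HY u v E). reflexivity. Qed.

Hypothesis h_pos : h > 0.

Lemma d_term_bounds c (X Y : R -> V) i l r : cell_constant h c (delta X Y) ->
  (forall u, IZR i * h < u < (IZR i + 1) * h -> l <= delta X Y u <= r) ->
  l * / 4 ^ Z.abs_nat i <= d_term h X Y i <= r * / 4 ^ Z.abs_nat i.
Proof.
  intros Hc Hb. unfold d_term. replace ((IZR i + 1) * h) with (IZR i * h + h) in * by ring.
  pose proof (integral_cell_constant_bounds h c _ (IZR i * h) l r h_pos Hc Hb) as [I1 I2].
  set (I := integral _ _ _) in *.
  assert (Hmean : l <= / h * I <= r).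
  { split; apply Rmult_le_reg_l with h; try lra;
      replace (h * (/ h * I)) with I by (field; lra); lra. }
  pose proof (inv_pow4_pos (Z.abs_nat i)). split; nra.
Qed.

Lemma d_term_geom_dominated c (X Y : R -> V) :
  cell_constant h c X -> cell_constant h c Y -> geom_dominated (d_term h X Y).
Proof.
  intros HX HY i. pose proof (d_term_bounds c X Y i 0 1 (cell_constant_delta c X Y HX HY)
    (fun u _ => delta_bounds X Y u)). lra.
Qed.

Lemma d_le_of_agree c (X Y : R -> V) M : cell_constant h c X -> cell_constant h c Y ->
  (forall u, - (INR M + 1) * h < u < (INR M + 1) * h -> X u = Y u) -> d h X Y <= 2/3 * / 4 ^ M.
Proof.
  intros HX HY Hagree. apply d_le_of_vanish; [exact (d_term_geom_dominated c X Y HX HY)|].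
  intros i Hi.
  assert (HiM : - INR M <= IZR i <= INR M).
  { rewrite INR_IZR_INZ, <- opp_IZR. split; apply IZR_le; lia. }
  pose proof (d_term_bounds c X Y i 0 0 (cell_constant_delta c X Y HX HY)) as Hb.
  assert (0 <= d_term h X Y i <= 0); [|lra].
  rewrite Rmult_0_l in Hb. apply Hb. intros u Hu.
  rewrite delta_eq0; [lra|]. apply Hagree. split; nra.
Qed.

Lemma one_le_d_of_differ c (X Y : R -> V) : cell_constant h c X -> cell_constant h c Y ->
  (forall u, 0 < u < h -> X u <> Y u) -> 1 <= d h X Y.
Proof.
  intros HX HY Hdiff. apply Rle_trans with (d_term h X Y 0); [|exact (d_term_0_le_d X Y (d_term_geom_dominated c X Y HX HY))].
  pose proof (d_term_bounds c X Y 0 1 1 (cell_constant_delta c X Y HX HY)) as Hb.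
  simpl in Hb. rewrite Rinv_1, Rmult_1_l in Hb. apply Hb. intros u Hu.
  rewrite delta_eq1; [lra|]. apply Hdiff. lra.
Qed.

End Metric.

Section Walks.
Variables (V : Type) (e : V -> V -> Prop).

Definition infinite_walk (q : nat -> V) : Prop := forall n, e (q n) (q (S n)).

Definition prepend (u : V) (q : nat -> V) : nat -> V :=
  fun n => match n with O => u | S k => q k end.

Lemma infinite_walk_prepend u q : e u (q O) -> infinite_walk q -> infinite_walk (prepend u q).
Proof. intros Hu Hq [|n]; simpl; auto. Qed.

Hypothesis succ_total : forall w, exists z, e w z.

Lemma exists_walk_through u y : e u y -> exists q, q O = u /\ q 1%nat = y /\ infinite_walk q.
Proof.
  intros Huy. destruct (choice e succ_total) as [next Hnext].
  exists (prepend u (fun n => Nat.iter n next y)). repeat split.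
  apply infinite_walk_prepend; [exact Huy | intros n; apply Hnext].
Qed.

Variables (v w1 w2 : V).
Hypotheses (w1_neq_w2 : w1 <> w2) (e_v_w1 : e v w1) (e_v_w2 : e v w2).

(* Follow a fixed walk to the branching vertex [v]; [p] leaves it at the latest one step after [v]. *)
Lemma exists_diverging_walk u : clos_refl_trans_1n V e u v ->
  forall p, p O = u -> infinite_walk p -> exists q m, q O = u /\ infinite_walk q /\ q m <> p m.
Proof.
  intros Hreach. remember v as v' eqn:Ev.
  induction Hreach as [u | u y z Huy _ IH]; intros p Hp0 Hp; subst u.
  - assert (Hw : exists w, e v w /\ w <> p 1%nat).
    { destruct (classic (w1 = p 1%nat)) as [E | NE].
      - exists w2. split; congruence.
      - exists w1. auto. }
    destruct Hw as [w [Hvw Hwp]]. destruct (exists_walk_through v w Hvw) as [q [Hq0 [Hq1 Hq]]].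
    exists q, 1%nat. rewrite Hq1. auto.
  - destruct (classic (p 1%nat = y)) as [E | NE].
    + destruct (IH Ev e_v_w1 e_v_w2 (fun n => p (S n)) E (fun n => Hp (S n))) as [q [m [Hq0 [Hq Hm]]]].
      exists (prepend (p O) q), (S m). repeat split; auto.
      apply infinite_walk_prepend; [rewrite Hq0; auto | exact Hq].
    + destruct (exists_walk_through (p O) y Huy) as [q [Hq0 [Hq1 Hq]]].
      exists q, 1%nat. rewrite Hq1. auto.
Qed.

Definition splice (s : Z -> V) (K : Z) (q : nat -> V) : Z -> V :=
  fun i => if (i <=? K)%Z then s i else q (Z.to_nat (i - K)).

Lemma splice_in_Omega s K q : in_Omega e s -> infinite_walk q -> q O = s K ->
  in_Omega e (splice s K q).
Proof.
  intros Hs Hq Hq0 i. unfold splice.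
  destruct (Z.leb_spec i K), (Z.leb_spec (i + 1) K); try lia.
  - apply Hs.
  - replace i with K by lia. replace (Z.to_nat (K + 1 - K)) with 1%nat by lia.
    rewrite <- Hq0. apply Hq.
  - replace (Z.to_nat (i + 1 - K)) with (S (Z.to_nat (i - K))) by lia. apply Hq.
Qed.

Hypothesis reaches_branch : forall u, clos_refl_trans_1n V e u v.

Lemma exists_perturbation s K : in_Omega e s ->
  exists r j, in_Omega e r /\ (forall i, (i <= K)%Z -> r i = s i) /\ (K < j)%Z /\ s j <> r j.
Proof.
  intros Hs. set (p := fun n => s (K + Z.of_nat n)%Z).
  assert (Hp : infinite_walk p).
  { intros n. unfold p. replace (K + Z.of_nat (S n))%Z with (K + Z.of_nat n + 1)%Z by lia. apply Hs. }
  destruct (exists_diverging_walk (s K) (reaches_branch (s K)) p) as [q [m [Hq0 [Hq Hm]]]];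
    [unfold p; f_equal; lia | exact Hp |].
  assert (Hm0 : m <> O) by (intros ->; apply Hm; rewrite Hq0; unfold p; f_equal; lia).
  exists (splice s K q), (K + Z.of_nat m)%Z. repeat split.
  - exact (splice_in_Omega s K q Hs Hq Hq0).
  - intros i Hi. unfold splice. destruct (Z.leb_spec i K); [reflexivity | lia].
  - lia.
  - unfold splice. destruct (Z.leb_spec (K + Z.of_nat m) K); [lia|].
    replace (Z.to_nat (K + Z.of_nat m - K)) with m by lia. intros E. apply Hm. symmetry. exact E.
Qed.

End Walks.

Lemma strongly_connected_succ_total {V : Type} (e : V -> V -> Prop) :
  strongly_connected e -> forall w, exists z, e w z.
Proof.
  intros Hsc w. pose proof (clos_trans_t1n _ _ _ _ (Hsc w w)) as Hww.
  inversion Hww; eauto.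
Qed.

Lemma strongly_connected_reaches {V : Type} (e : V -> V -> Prop) :
  strongly_connected e -> forall u v, clos_refl_trans_1n V e u v.
Proof. intros Hsc u v. apply clos_rt_rt1n, clos_t_clos_rt, Hsc. Qed.

Section Shifts.
Context {V : Type} (e : V -> V -> Prop) (h : R) (h_pos : h > 0).

Lemma in_Delta_cell_repr x : in_Delta e h x ->
  exists s c, in_Omega e s /\ x = (fun u => s (cell h c u)).
Proof.
  intros [xb [c [[Hstep Hom] Hx]]]. exists (fun i => xb (IZR i * h)), c. split; [exact Hom|].
  apply functional_extensionality. intros u. rewrite Hx.
  apply Hstep. pose proof (cell_bounds h c u h_pos). lra.
Qed.

Lemma in_Delta_of_Omega s c : in_Omega e s -> in_Delta e h (fun u => s (cell h c u)).
Proof.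
  intros Hs. exists (fun u => s (cell h 0 u)), c. repeat split.
  - intros n t Ht. rewrite cell_mult by exact h_pos.
    rewrite (cell_unique h 0 t n) by (auto; lra). reflexivity.
  - intros i. rewrite !cell_mult by exact h_pos. apply Hs.
  - intros u. unfold cell. rewrite Rplus_0_r. reflexivity.
Qed.

Lemma psi_cell (s : Z -> V) c t : psi t (fun u => s (cell h c u)) = (fun u => s (cell h (t + c) u)).
Proof. apply functional_extensionality. intros u. unfold psi. rewrite cell_shift. reflexivity. Qed.

End Shifts.

Lemma exists_inv_pow4_lt eps : 0 < eps -> exists M, / 4 ^ M < eps.
Proof.
  intros Heps. destruct (pow_lt_1_zero (/ 4) ltac:(rewrite Rabs_pos_eq; lra) eps Heps) as [M HM].
  exists M. specialize (HM M (le_n M)). rewrite Rabs_pos_eq, pow_inv in HM; [exact HM|].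
  apply pow_le. lra.
Qed.

Theorem mainTheorem11 (V : Type) (e : V -> V -> Prop) (h : R) :
  finite_type V -> h > 0 ->
  strongly_connected e -> has_outdeg_ge2 e ->
  sensitive_dependence e h.
Proof.
  intros _ hp Hsc [v [w1 [w2 [Hw [Hv1 Hv2]]]]].
  exists (1/2). split; [lra|].
  intros x Hx B [_ [eps [Heps HB]]].
  destruct (in_Delta_cell_repr e h hp x Hx) as [s [c [Hs ->]]].
  destruct (exists_inv_pow4_lt eps Heps) as [M HM].
  set (K := cell h c ((INR M + 1) * h)).
  destruct (exists_perturbation V e (strongly_connected_succ_total e Hsc) v w1 w2 Hw Hv1 Hv2
              (fun u => strongly_connected_reaches e Hsc u v) s K Hs) as [r [j [Hr [Hagree [HKj Hdiff]]]]].
  exists (fun u => r (cell h c u)), (IZR j * h - c). repeat split.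
  - apply HB; [exact (in_Delta_of_Omega e h hp r c Hr)|].
    enough (d h (fun u => s (cell h c u)) (fun u => r (cell h c u)) <= 2/3 * / 4 ^ M) by lra.
    apply (d_le_of_agree h hp c); try apply cell_constant_comp.
    intros u Hu. symmetry. apply Hagree. apply cell_monotone; [exact hp | lra].
  - assert (HjK : IZR K + 1 <= IZR j) by (rewrite <- plus_IZR; apply IZR_le; lia).
    pose proof (cell_bounds h c ((INR M + 1) * h) hp) as HK. fold K in HK.
    pose proof (pos_INR M). nra.
  - rewrite !psi_cell. apply Rlt_le_trans with 1; [lra|].
    apply (one_le_d_of_differ h hp (IZR j * h - c + c)); try apply cell_constant_comp.
    intros u Hu. rewrite (cell_unique h _ u j) by (auto; lra). exact Hdiff.
Qed.
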